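(* Let $n\ge 5$ and let $\{C_i,C_j,C_k\}$ be a critical triplet in $\mathcal C_{[n]}$. Then $C_j$ and $C_k$ are not adjacent in $G_{NNI}(n)$; equivalently, $C_j$ and $C_k$ do not cover a common element of $S([n])$.
   Context: An $X$-tree is a pair $(T,\phi)$ with $T$ a finite tree and $\phi:X\to V(T)$ a map such that every vertex not in $\phi(X)$ has degree at least $3$; a vertex is labeled if it lies in $\phi(X)$. An $X$-forest is a set $\{(A,\mathcal T_A):A\in\pi\}$ where $\pi$ is a set partition of $X$ and each $\mathcal T_A$ is an $A$-tree. Contracting an edge $e=(u,v)$ removes $e$ and identifies $u,v$, the new vertex carrying the union of the labels. Deleting $e$ removes it without changing vertices; it is safe if each of $u,v$ is labeled or has degree greater than $3$. The Tuffley poset $S(X)$ is the set of $X$-forests with $\mathcal F'\le\mathcal F$ iff $\mathcal F'$ is obtained from $\mathcal F$ by a sequence of contractions and safe deletions; covers are single contractions or safe deletions. $\mathcal C_{X}$ is the set of maximal elements of $S(X)$: trees with leaves labeled bijectively by $X$ and internal vertices unlabeled of degree $3$. Here $X=[n]=\{1,\dots,n\}$. NNI: for $C\in\mathcal C_X$ and an internal edge $\alpha=(u,v)$ separating subtrees $A,B$ at $u$ from $C',D$ at $v$, swapping $B$ with $C'$ or $B$ with $D$ is a nearest neighbor interchange over $\alpha$. $G_{NNI}(n)$ is the graph on vertex set $\mathcal C_{[n]}$ with an edge between two trees iff they are related by one NNI. A critical triplet is a triple $\{C_i,C_j,C_k\}$ of elements of $\mathcal C_{[n]}$ such that: (1)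 $C_i$ has a leaf labeled $x$ whose leaf edge $e_x$ is adjacent to two internal edges $e_{x_1}$ and $e_{x_2}$; (2) $C_j\neq C_i$ and both $C_i$ and $C_j$ cover $F_j$, the element obtained from $C_i$ by contracting $e_{x_1}$; (3) $C_k\neq C_i$ and both $C_i$ and $C_k$ cover $F_k$, the element obtained from $C_i$ by contracting $e_{x_2}$. *)

From mathcomp Require Import all_boot.
Unset Printing Implicit Defensive.

(* X = [n] is represented by 'I_n.  Elements of S([n]) are those records
   satisfying [is_xforest]; equality in S([n]) is isomorphism [xiso]. *)
Record xforest (n : nat) := XForest {
  nv : nat;
  adj : rel 'I_nv;
  lab : 'I_n -> 'I_nv }.
Arguments XForest {n} nv adj lab.
Arguments nv {n} _.
Arguments adj {n} _ _ _.
Arguments lab {n} _ _.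

Section Defs.
Variable n : nat.
Implicit Types F G : xforest n.

Definition deg F (x : 'I_(nv F)) : nat := #|[set y | adj F x y]|.
Definition labeled F (x : 'I_(nv F)) : bool := [exists i, lab F i == x].
Definition leaf F (x : 'I_(nv F)) : bool := deg F x == 1.
Definition internal F (x : 'I_(nv F)) : bool := ~~ leaf F x.

Definition sedge (T : eqType) (x y a b : T) : bool :=
  ((x == a) && (y == b)) || ((x == b) && (y == a)).

Definition acyclic F : Prop :=
  forall s : seq 'I_(nv F), uniq s -> 2 < size s -> ~~ cycle (adj F) s.

Definition is_xforest F : Prop :=
  [/\ symmetric (adj F), (forall x, ~~ adj F x x), acyclic F,
      (forall x, exists i, connect (adj F) x (lab F i)) &
      (forall x, ~~ labeled F x -> 3 <= deg F x)].

Definition connected F : Prop := forall x y, connect (adj F) x y.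

Definition is_maxtree F : Prop :=
  [/\ is_xforest F, connected F, injective (lab F),
      (forall x, labeled F x = leaf F x) &
      (forall x, ~~ labeled F x -> deg F x = 3)].

Definition xiso F G : Prop :=
  exists f : 'I_(nv F) -> 'I_(nv G),
    [/\ bijective f, (forall i, lab G i = f (lab F i)) &
        (forall x y, adj G (f x) (f y) = adj F x y)].

(* G is (isomorphic to) the result of contracting edge (u,v) of F *)
Definition contract_on F G (u v : 'I_(nv F)) : Prop :=
  adj F u v /\
  exists f : 'I_(nv F) -> 'I_(nv G),
    [/\ (forall y, exists x, f x = y),
        f u = f v,
        (forall x y, f x = f y -> x = y \/ sedge _ x y u v),
        (forall i, lab G i = f (lab F i)) &
        (forall x' y', adj G x' y' <->
           exists x y, [/\ f x = x', f y = y', adj F x y & ~~ sedge _ x y u v])].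

Definition delete_on F G (u v : 'I_(nv F)) : Prop :=
  adj F u v /\
  exists f : 'I_(nv F) -> 'I_(nv G),
    [/\ bijective f, (forall i, lab G i = f (lab F i)) &
        (forall x y, adj G (f x) (f y) = adj F x y && ~~ sedge _ x y u v)].

Definition safe_del F (u v : 'I_(nv F)) : Prop :=
  (labeled F u || (3 < deg F u)) /\ (labeled F v || (3 < deg F v)).

Definition covers F G : Prop :=
  is_xforest F /\ is_xforest G /\
  exists u v : 'I_(nv F),
    contract_on F G u v \/ (delete_on F G u v /\ safe_del F u v).

Definition nni_swap F (u v b c : 'I_(nv F)) : xforest n :=
  XForest (nv F)
    (fun x y => (adj F x y && ~~ sedge _ x y u b && ~~ sedge _ x y v c)
                || sedge _ x y u c || sedge _ x y v b)
    (lab F).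

Definition nni F G : Prop :=
  exists u v b c : 'I_(nv F),
    adj F u v /\ internal F u /\ internal F v /\
    adj F u b /\ b != v /\ adj F v c /\ c != u /\
    xiso (nni_swap F u v b c) G.

Definition nni_adj F G : Prop := [/\ is_maxtree F, is_maxtree G & nni F G].

Definition critical_triplet (Ci Cj Ck : xforest n) : Prop :=
  is_maxtree Ci /\ is_maxtree Cj /\ is_maxtree Ck /\
  exists (x : 'I_n) (p q1 q2 : 'I_(nv Ci)),
    (* (1) leaf edge e_x = {lab x, p}, adjacent internal edges
           e_x1 = {p, q1} and e_x2 = {p, q2} *)
    leaf Ci (lab Ci x) /\ adj Ci (lab Ci x) p /\
    adj Ci p q1 /\ adj Ci p q2 /\ q1 != q2 /\
    q1 != lab Ci x /\ q2 != lab Ci x /\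
    internal Ci p /\ internal Ci q1 /\ internal Ci q2 /\
    (~ xiso Ci Cj /\
       exists Fj, contract_on Ci Fj p q1 /\ covers Ci Fj /\ covers Cj Fj) /\
    (~ xiso Ci Ck /\
       exists Fk, contract_on Ci Fk p q2 /\ covers Ci Fk /\ covers Ck Fk).

End Defs.

Arguments deg {n} F x.
Arguments labeled {n} F x.
Arguments leaf {n} F x.
Arguments internal {n} F x.
Arguments acyclic {n} F.
Arguments is_xforest {n} F.
Arguments connected {n} F.
Arguments is_maxtree {n} F.
Arguments xiso {n} F G.
Arguments contract_on {n} F G u v.
Arguments delete_on {n} F G u v.
Arguments safe_del {n} F u v.
Arguments covers {n} F G.
Arguments nni_swap {n} F u v b c.
Arguments nni {n} F G.
Arguments nni_adj {n} F G.
Arguments critical_triplet {n} Ci Cj Ck.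

(* In C_i, contracting e_x1 = {p, q1} merges p and q1 into a vertex w of degree
   four, adjacent to x, q2 and the two other neighbours r1, r2 of q1.  No deletion
   is safe in a binary tree once n >= 3, so C_j covers F_j by contracting an edge,
   and that edge must be a resolution of w: its two ends carry two neighbours of w
   each.  The split {x, q2} | {r1, r2} gives back C_i, hence C_j displays xa|bc or
   xb|ac on the resolved edge and cd|xa on the edge leading to q2, where a, b, c, d
   are labels behind r1, r2 and the two other neighbours of q2.  Symmetrically C_k
   displays xc|da or xd|ca, and ab|xc.
   If C_j and C_k covered a common G (as NNI neighbours do, an NNI over an edge
   commuting with the contraction of that edge), every edge of C_j but one would
   survive in G and thus reappear in C_k with the same split of the labels.  One of
   the two quartets of C_j would then be displayed by C_k next to an incompatible
   one, while a tree displays only one split of any four labels. *)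

From mathcomp Require Import all_boot.

Set Implicit Arguments.
Unset Printing Implicit Defensive.

Section UnorderedPairs.
Context {T : eqType}.
Implicit Types x y a b : T.

Lemma sedgeP x y a b :
  reflect ((x = a /\ y = b) \/ (x = b /\ y = a)) (sedge _ x y a b).
Proof.
rewrite /sedge; apply: (iffP orP) =>
  [[/andP [/eqP-> /eqP->]|/andP [/eqP-> /eqP->]]|[[-> ->]|[-> ->]]];
  rewrite ?eqxx; auto.
Qed.

Lemma sedge_swapl x y a b : sedge _ x y a b = sedge _ y x a b.
Proof. by rewrite /sedge; case: (x == a); case: (x == b); case: (y == a); case: (y == b). Qed.

Lemma sedge_swapr x y a b : sedge _ x y a b = sedge _ x y b a.
Proof. by rewrite /sedge; case: (x == a); case: (x == b); case: (y == a); case: (y == b). Qed.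

Lemma sedge_sym x y a b : sedge _ x y a b = sedge _ a b x y.
Proof.
rewrite /sedge (eq_sym x) (eq_sym y) (eq_sym x b) (eq_sym y a).
by case: (a == x); case: (b == y); case: (b == x); case: (a == y).
Qed.

Lemma sedge_refl a b : sedge _ a b a b.
Proof. by rewrite /sedge !eqxx. Qed.

Lemma sedge_refl_swap a b : sedge _ b a a b.
Proof. by rewrite /sedge !eqxx orbT. Qed.

Lemma sedge_trans {x y c d a b} :
  sedge _ x y a b -> sedge _ c d a b -> sedge _ x y c d.
Proof.
by move=> /sedgeP [[-> ->]|[-> ->]] /sedgeP [[-> ->]|[-> ->]];
  rewrite ?sedge_refl ?sedge_refl_swap.
Qed.

Lemma sedge_neq {x y a b} : x != a -> x != b -> ~~ sedge _ x y a b.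
Proof. by move=> xa xb; apply/sedgeP => -[[E _]|[E _]]; rewrite E eqxx in xa xb. Qed.

End UnorderedPairs.

Section ConnectTransport.
Context {T T' : finType} {r : rel T} {r' : rel T'} {h : T -> T'} {a : T}.

Lemma connect_homo_from {b} :
  (forall x y, connect r a x -> r x y -> h x = h y \/ r' (h x) (h y)) ->
  connect r a b -> connect r' (h a) (h b).
Proof.
move=> hr /connectP [p pa ->]; elim/last_ind: p pa => [|p y IHp] //=.
rewrite rcons_path last_rcons => /andP [pa ry].
have ax : connect r a (last a p) by apply/connectP; exists p.
case: (hr _ _ ax ry) => [<-|r'y]; first exact: IHp.
exact: connect_trans (IHp pa) (connect1 r'y).
Qed.

Lemma connect_lift_from {b'} :
  (forall x y', connect r a x -> r' (h x) y' -> exists2 y, h y = y' & connect r x y) ->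
  connect r' (h a) b' -> exists2 b, h b = b' & connect r a b.
Proof.
move=> hr /connectP [p pa ->]; elim/last_ind: p pa => [|p y' IHp] /=.
  by exists a.
rewrite rcons_path last_rcons => /andP [/IHp [x <- ax] r'y].
have [y <- xy] := hr _ _ ax r'y.
by exists y => //; exact: connect_trans ax xy.
Qed.

End ConnectTransport.

Lemma connect_sub_from (T : finType) (r r' : rel T) a b :
  (forall x y, connect r a x -> r x y -> r' x y) ->
  connect r a b -> connect r' a b.
Proof.
by move=> hr; apply: (@connect_homo_from _ _ r r' id) => x y ax /(hr _ _ ax); right.
Qed.

Definition forest_graph n (F : xforest n) : Prop :=
  [/\ symmetric (adj F), forall x, ~~ adj F x x & acyclic F].

Lemma xforest_graph n (F : xforest n) : is_xforest F -> forest_graph F.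
Proof. by case. Qed.

Lemma maxtree_graph n (F : xforest n) : is_maxtree F -> forest_graph F.
Proof. by case=> /xforest_graph. Qed.

Definition adj_cut n (F : xforest n) (u v : 'I_(nv F)) : rel 'I_(nv F) :=
  fun x y => adj F x y && ~~ sedge _ x y u v.

Definition side n (F : xforest n) (u v : 'I_(nv F)) : {set 'I_n} :=
  [set i | connect (adj_cut F u v) u (lab F i)].

Definition quartet n (F : xforest n) (u v : 'I_(nv F)) (i j k l : 'I_n) : Prop :=
  [/\ adj F u v, i \in side F u v, j \in side F u v, k \in side F v u
    & l \in side F v u].

Lemma quartet_swapl n (F : xforest n) u v i j k l :
  quartet F u v i j k l -> quartet F u v j i k l.
Proof. by case. Qed.

Section ForestGraph.
Variables (n : nat) (F : xforest n).
Hypothesis HF : forest_graph F.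
Local Notation V := 'I_(nv F).
Implicit Types u v w x y z : V.

Lemma adj_sym x y : adj F x y = adj F y x.
Proof. by case: HF. Qed.

Lemma adj_irr x : adj F x x = false.
Proof. by case: HF => _ /(_ x) /negbTE. Qed.

Lemma adj_neq {x y} : adj F x y -> x != y.
Proof. by apply: contraTneq => ->; rewrite adj_irr. Qed.

Lemma no_triangle {x y z} : adj F x y -> adj F y z -> adj F z x -> False.
Proof.
move=> xy yz zx; case: HF => _ _ /(_ [:: x; y; z]).
rewrite /= !inE negb_or (adj_neq xy) (adj_neq yz) eq_sym (adj_neq zx) xy yz zx.
by move/(_ isT isT).
Qed.

Lemma adj_cut_sym u v : symmetric (adj_cut F u v).
Proof. by move=> x y; rewrite /adj_cut adj_sym sedge_swapl. Qed.

Lemma adj_cutC u v : adj_cut F v u =2 adj_cut F u v.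
Proof. by move=> x y; rewrite /adj_cut sedge_swapr. Qed.

Lemma connect_adj_cut_sym u v x y :
  connect (adj_cut F u v) x y = connect (adj_cut F u v) y x.
Proof. exact/sym_connect_sym/adj_cut_sym. Qed.

Lemma adj_cut_adj {u v x y} : adj_cut F u v x y -> adj F x y.
Proof. by case/andP. Qed.

Lemma cut_edge_disconnects {u v} : adj F u v -> ~~ connect (adj_cut F u v) u v.
Proof.
move=> uv; apply/negP => /connectP [p pth lst].
move: lst; case: (shortenP pth) => p' pth' up' _ lst.
case: p' pth' up' lst => [|y [|z r]] pth' up' lst.
- by move: uv; rewrite lst /= adj_irr.
- by move: lst pth' => /= ->; rewrite /adj_cut sedge_refl andbF.
- case: HF => _ _ /(_ (u :: y :: z :: r) up' isT); apply/negP/negPn.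
  rewrite /cycle rcons_path (sub_path (@adj_cut_adj u v) pth') /=.
  by rewrite -[last _ _]lst adj_sym.
Qed.

Lemma sides_disjoint {u v i} : adj F u v -> i \in side F u v -> i \in side F v u -> False.
Proof.
move=> uv; rewrite !inE (eq_connect (adj_cutC u v)) => ui vi.
move/negP: (cut_edge_disconnects uv); apply.
by apply: connect_trans ui _; rewrite connect_adj_cut_sym.
Qed.

(* Paths leaving [w] without using the edge [{w, u}] never come back to [u]. *)
Lemma side_subset {u v w} : adj F u v -> adj F u w -> w != v ->
  side F w u \subset side F u v.
Proof.
move=> uv uw wv; apply/subsetP => i; rewrite !inE => wi.
have wu : adj F w u by rewrite adj_sym.
have wi' : connect (adj_cut F u v) w (lab F i).
  apply: connect_sub_from wi => z z' wz /[dup] /andP [zz' _] wzz'.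
  rewrite /adj_cut zz'; apply/sedgeP => -[[E1 E2]|[E1 E2]].
  - by move: wz; rewrite E1 (negbTE (cut_edge_disconnects wu)).
  - move/negP: (cut_edge_disconnects wu); apply.
    by have := connect_trans wz (connect1 wzz'); rewrite E2.
apply: connect_trans wi'; apply: connect1.
rewrite /adj_cut uw; apply/sedgeP => -[[_ E]|[E _]].
- by rewrite E eqxx in wv.
- by move: uv; rewrite E adj_irr.
Qed.

Lemma connect_adj_cut_avoid {u v u' v' a y} :
  (forall z, connect (adj_cut F u v) a z -> z != u' /\ z != v') ->
  connect (adj_cut F u v) a y -> connect (adj_cut F u' v') a y.
Proof.
move=> avoid; apply: connect_sub_from => z w az /andP [zw _].
by case: (avoid z az) => zu zv; rewrite /adj_cut zw sedge_neq.
Qed.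

Lemma side_connect {u v a k l} :
  connect (adj_cut F u v) a (lab F k) -> connect (adj_cut F u v) a (lab F l) ->
  k \in side F u v -> l \in side F u v.
Proof.
rewrite !inE => ak al uk; apply: connect_trans uk _.
by apply: connect_trans _ al; rewrite connect_adj_cut_sym.
Qed.

(* If [u'] lies on the [u]-side of [{u, v}], the [v]-side, which contains [k]
   and [l], lies on one side of [{u', v'}]; otherwise the [u]-side, which
   contains [i] and [j], does. *)
Lemma quartet_incompatible {u v u' v' i j k l} :
  quartet F u v i j k l -> quartet F u' v' i k j l -> False.
Proof.
case=> uv i1 j1 k1 l1 [uv' i2 k2 j2 l2].
case: (boolP (sedge _ u' v' u v)) => [/sedgeP [[E1 E2]|[E1 E2]]|ne].
- by subst; apply: (sides_disjoint uv k2 k1).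
- by subst; apply: (sides_disjoint uv i1 i2).
have cut_uv : forall z, connect (adj_cut F u v) u u' ->
    connect (adj_cut F u v) v z -> z != u' /\ z != v'.
  move=> z uu' vz; split; apply/eqP => E; subst z;
    move/negP: (cut_edge_disconnects uv); apply; apply: connect_trans uu' _.
  - by rewrite connect_adj_cut_sym.
  - apply: connect_trans (connect1 (_ : adj_cut F u v u' v')) _.
      by rewrite /adj_cut uv' ne.
    by rewrite connect_adj_cut_sym.
case: (boolP (connect (adj_cut F u v) u u')) => cu.
- move: k1 l1; rewrite !inE !(eq_connect (adj_cutC u v)) => k1 l1.
  have avoid := cut_uv^~ cu.
  have l3 : l \in side F u' v'.
    exact: side_connect (connect_adj_cut_avoid avoid k1)
                        (connect_adj_cut_avoid avoid l1) k2.
  exact: sides_disjoint uv' l3 l2.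
- have avoid : forall z, connect (adj_cut F u v) u z -> z != u' /\ z != v'.
    move=> z uz; split; apply/eqP => E; subst z; first by rewrite uz in cu.
    move/negP: cu; apply; apply: connect_trans uz (connect1 _).
    by rewrite /adj_cut adj_sym uv' sedge_swapl ne.
  move: i1 j1; rewrite !inE => i1 j1.
  have j3 : j \in side F u' v'.
    exact: side_connect (connect_adj_cut_avoid avoid i1)
                        (connect_adj_cut_avoid avoid j1) i2.
  exact: sides_disjoint uv' j3 j2.
Qed.

Lemma path_adj_cut {u v w s} :
  path (adj F) w s -> v \notin w :: s -> path (adj_cut F u v) w s.
Proof.
elim: s w => [|y s IHs] w //= /andP [wy ys].
rewrite !inE !negb_or => /andP [wv /andP [yv sv]].
rewrite IHs ?inE ?negb_or ?yv // andbT /adj_cut wy.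
by apply/sedgeP => -[[_ E]|[E _]]; rewrite E eqxx in yv wv.
Qed.

Lemma path_no_chord {w h z s} : uniq (w :: h :: s) ->
  path (adj F) w (h :: s) -> adj F w z -> z \in s -> False.
Proof.
move=> + + wz zs; case/splitPr: zs => s1 s2; case: HF => _ _ acF.
rewrite -cat_rcons -!cat_cons cat_uniq cat_path.
move=> /andP [un _] /andP [pth _].
have := acF (w :: h :: rcons s1 z) un; rewrite /= size_rcons ltnS ltnS ltn0Sn.
move/(_ isT)/negP; apply; rewrite /cycle rcons_path last_rcons.
by move: pth => /= /andP [-> ->]; rewrite adj_sym wz.
Qed.

End ForestGraph.

Lemma card_gt2_avoid (T : finType) (A : {set T}) a b :
  2 < #|A| -> exists z, [/\ z \in A, z != a & z != b].
Proof.
move=> A3; have /card_gt0P [z] : 0 < #|A :\ a :\ b|.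
  have : #|A| <= 2 + #|A :\ a :\ b|.
    rewrite (cardsD1 a A) (cardsD1 b (A :\ a)) addnA leq_add2r.
    exact: (leq_add (leq_b1 _) (leq_b1 _)).
  by rewrite -(ltn_add2l 2) addn0; apply: leq_trans.
by rewrite !inE => /and3P [zb za zA]; exists z.
Qed.

Section XForestSides.
Variables (n : nat) (F : xforest n).
Hypothesis HF : is_xforest F.
Let HG : forest_graph F := xforest_graph HF.
Local Notation V := 'I_(nv F).

(* An unlabeled start has a third neighbour, which acyclicity keeps off the
   path. *)
Lemma side_walk_extend {u v w : V} {s : seq V} :
  uniq (w :: s) -> path (adj F) w s -> last w s = u -> v \notin w :: s ->
  (exists i, i \in side F u v) \/
  exists z, [/\ uniq (z :: w :: s), path (adj F) z (w :: s) & v \notin z :: w :: s].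
Proof.
move=> un pth lst vn; case: HF => _ _ _ _ degF.
case: (boolP (labeled F w)) => [/existsP [i /eqP Ei]|nl].
  left; exists i; rewrite inE connect_adj_cut_sym // Ei -{2}lst.
  by apply/connectP; exists s => //; apply: path_adj_cut.
right; have [z [wz zv zh]] := card_gt2_avoid _ v (head v s) (degF w nl).
rewrite inE in wz.
have zw : z != w by rewrite eq_sym (adj_neq HG wz).
have zs : z \notin w :: s.
  rewrite inE (negbTE zw) /=; apply/negP => zs.
  case: s zh zs un pth {lst vn} => [//|h s] zh.
  rewrite in_cons (negbTE zh) orFb => zs un pth.
  exact: (path_no_chord HG un pth wz zs).
by exists z; rewrite cons_uniq zs un /= adj_sym // wz pth inE negb_or eq_sym zv.
Qed.

Lemma side_nonempty {u v : V} : adj F u v -> exists i, i \in side F u v.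
Proof.
move=> uv.
suff walk : forall k w s, nv F - size (w :: s) <= k ->
    uniq (w :: s) -> path (adj F) w s -> last w s = u -> v \notin w :: s ->
    exists i, i \in side F u v.
  by apply: (walk (nv F) u [::]); rewrite ?leq_subr // inE eq_sym (adj_neq HG uv).
elim=> [|k IHk] w s hk un pth lst vn;
  case: (side_walk_extend un pth lst vn) => // -[z [un' pth' vn']].
- have : size (z :: w :: s) <= nv F.
    by move/card_uniqP: un' => <-; apply: leq_trans (max_card _) _; rewrite card_ord.
  by move: hk; rewrite leqn0 subn_eq0 => hk /leq_trans/(_ hk); rewrite ltnn.
- by apply: (IHk z (w :: s)) => //; move: hk; rewrite [size (z :: _)]/= subnS; case: (_ - _).
Qed.

End XForestSides.

Lemma card_gt3_of (T : finType) (A : {set T}) (a b c d : T) :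
  a \in A -> b \in A -> c \in A -> d \in A ->
  a != b -> a != c -> a != d -> b != c -> b != d -> c != d -> 3 < #|A|.
Proof.
move=> aA bA cA dA ab ac ad bc bd cd.
rewrite (cardsD1 a A) aA add1n ltnS; apply/card_gt2P.
exists b, c, d; rewrite !inE ![_ == a]eq_sym ab ac ad bA cA dA bc cd eq_sym bd.
by split.
Qed.

Section MaxTree.
Variables (n : nat) (F : xforest n).
Hypothesis HM : is_maxtree F.
Local Notation V := 'I_(nv F).
Implicit Types a b c d u v y z : V.

Lemma maxtree_deg_le3 z : deg F z <= 3.
Proof.
case: HM => _ _ _ leafE deg3; case: (boolP (labeled F z)) => [|/deg3 -> //].
by rewrite leafE => /eqP ->.
Qed.

Lemma internal_unlabeled {z} : internal F z -> ~~ labeled F z.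
Proof. by case: HM => _ _ _ leafE _; rewrite leafE. Qed.

Lemma maxtree_unlabeled {z a b} : adj F z a -> adj F z b -> a != b -> ~~ labeled F z.
Proof.
move=> za zb ab; case: HM => _ _ _ leafE _; rewrite leafE /leaf.
have : 1 < deg F z by apply/card_gt1P; exists a, b; rewrite !inE za zb ab.
by case: (deg F z) => [|[|]].
Qed.

Lemma maxtree_nbrs4 {z a b c d} :
  adj F z a -> adj F z b -> adj F z c -> adj F z d ->
  a != b -> a != c -> a != d -> b != c -> b != d -> c != d -> False.
Proof.
move=> za zb zc zd ab ac ad bc bd cd.
have := card_gt3_of (A := [set y | adj F z y]) _ _ _ _ ab ac ad bc bd cd.
by rewrite !inE za zb zc zd -/(deg F z) ltnNge maxtree_deg_le3 => /(_ isT isT isT isT).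
Qed.

Lemma maxtree_nbrs3 {z a b c y} : adj F z a -> adj F z b -> adj F z c ->
  a != b -> a != c -> b != c -> adj F z y -> [\/ y = a, y = b | y = c].
Proof.
move=> za zb zc ab ac bc zy.
case: (eqVneq y a) => [|ya]; first by constructor 1.
case: (eqVneq y b) => [|yb]; first by constructor 2.
case: (eqVneq y c) => [|yc]; first by constructor 3.
by case: (maxtree_nbrs4 za zb zc zy ab ac _ bc _ _); rewrite eq_sym.
Qed.

Lemma maxtree_other_nbrs {z a} : ~~ labeled F z -> adj F z a ->
  exists b c, [/\ adj F z b, adj F z c, b != c, b != a & c != a].
Proof.
case: HM => _ _ _ _ /[apply] + za; rewrite /deg (cardsD1 a) inE za add1n => -[] deg2.
have /card_gt1P [b [c]] : 1 < #|[set y | adj F z y] :\ a| by rewrite deg2.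
by rewrite !inE => -[/andP [ba zb] /andP [ca zc] bc]; exists b, c.
Qed.

(* A safe deletion needs both ends labeled, i.e. two leaves, which then form a
   whole component carrying only two labels. *)
Lemma maxtree_no_safe_del u v : 2 < n -> adj F u v -> ~ safe_del F u v.
Proof.
move=> n2 uv [su sv].
have lab3 z : 3 < deg F z = false by rewrite ltnNge maxtree_deg_le3.
move: su sv; rewrite !lab3 !orbF => lu lv.
case: (HM) => HX conn lab_inj leafE _.
have HG := xforest_graph HX.
have leaf_nbr z y y' : labeled F z -> adj F z y -> adj F z y' -> y' = y.
  move=> lz zy zy'; apply/eqP; apply: contraTT lz => ne.
  rewrite leafE /leaf; apply/negP => /eqP deg1.
  have : 1 < deg F z by apply/card_gt1P; exists y', y; rewrite !inE zy zy' ne.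
  by rewrite deg1.
have closed z : connect (adj F) u z -> z = u \/ z = v.
  case/connectP=> p + ->; elim: p u v uv lu lv => [|y p IHp] u' v' uv' lu' lv' /=.
    by left.
  case/andP=> /(leaf_nbr _ _ _ lu' uv') -> /(IHp v' u').
  by rewrite adj_sym // => /(_ uv' lv' lu') [] ->; auto.
have lab_uv (i : 'I_n) : lab F i = u \/ lab F i = v by apply/closed/conn.
pose i0 : 'I_n := Ordinal (ltnW (ltnW n2)).
pose i1 : 'I_n := Ordinal (ltnW n2).
pose i2 : 'I_n := Ordinal n2.
case: (lab_uv i0) (lab_uv i1) (lab_uv i2) => E0 [] E1 [] E2.
all: first [ have := lab_inj i0 i1 (etrans E0 (esym E1))
           | have := lab_inj i0 i2 (etrans E0 (esym E2))
           | have := lab_inj i1 i2 (etrans E1 (esym E2)) ]; by [].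
Qed.

End MaxTree.

Record contraction n (F G : xforest n) (u v : 'I_(nv F))
    (f : 'I_(nv F) -> 'I_(nv G)) : Prop := Contraction {
  contr_edge : adj F u v;
  contr_surj : forall y, exists x, f x = y;
  contr_merge : f u = f v;
  contr_inj : forall x y, f x = f y -> x = y \/ sedge _ x y u v;
  contr_lab : forall i, lab G i = f (lab F i);
  contr_adjE : forall x' y', adj G x' y' <->
    exists x y, [/\ f x = x', f y = y', adj F x y & ~~ sedge _ x y u v] }.

Lemma contract_onP n (F G : xforest n) u v :
  contract_on F G u v -> exists f, contraction F G u v f.
Proof. by case=> uv [f [*]]; exists f; constructor. Qed.

Section Contraction.
Variables (n : nat) (F G : xforest n) (u0 v0 : 'I_(nv F)).
Variable f : 'I_(nv F) -> 'I_(nv G).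
Hypothesis HF : forest_graph F.
Hypothesis Hf : contraction F G u0 v0 f.
Local Notation V := 'I_(nv F).

Lemma contraction_sym : contraction F G v0 u0 f.
Proof.
case: Hf => uv surj merge inj labE adjE; constructor => //.
- by rewrite adj_sym.
- by move=> x y /inj; rewrite sedge_swapr.
- move=> x' y'; apply: iff_trans (adjE x' y') _.
  by split=> -[x [y [fx fy xy ne]]]; exists x, y; rewrite sedge_swapr.
Qed.

Lemma contr_adj_img {x y : V} : adj F x y -> ~~ sedge _ x y u0 v0 -> adj G (f x) (f y).
Proof. by move=> xy ne; apply/(contr_adjE Hf); exists x, y. Qed.

Lemma contr_inj_off {x z : V} : z != u0 -> z != v0 -> f x = f z -> x = z.
Proof.
move=> zu zv /(contr_inj Hf) [//|/sedgeP [[_ E]|[_ E]]]; by rewrite E eqxx in zu zv.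
Qed.

Lemma contr_merged {z : V} : f z = f u0 -> z = u0 \/ z = v0.
Proof. by case/(contr_inj Hf) => [|/sedgeP [[]|[]]]; auto. Qed.

Lemma contr_adj_off {z y : V} : z != u0 -> z != v0 -> y != u0 -> y != v0 ->
  adj G (f z) (f y) = adj F z y.
Proof.
move=> zu zv yu yv; apply/idP/idP => [|zy]; last first.
  exact: contr_adj_img zy (sedge_neq zu zv).
by case/(contr_adjE Hf) => [x [y' [/(contr_inj_off zu zv) -> /(contr_inj_off yu yv) ->]]].
Qed.

Lemma contr_nbr_off {z : V} {y'} : z != u0 -> z != v0 -> adj G (f z) y' ->
  exists2 y, f y = y' & adj F z y.
Proof.
move=> zu zv /(contr_adjE Hf) [x [y [/(contr_inj_off zu zv) -> fy xy _]]].
by exists y.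
Qed.

Lemma contr_nbr_merged {y'} : adj G (f u0) y' ->
  exists2 y, f y = y' & (adj F u0 y /\ y != v0) \/ (adj F v0 y /\ y != u0).
Proof.
case/(contr_adjE Hf) => [x [y [fx fy xy ne]]]; exists y => //.
have [] := contr_merged fx => E; subst x; [left | right]; split => //;
  by apply: contraNneq ne => ->; rewrite ?sedge_refl ?sedge_refl_swap.
Qed.

Lemma contr_adj_merged {y : V} :
  (adj F u0 y /\ y != v0) \/ (adj F v0 y /\ y != u0) -> adj G (f u0) (f y).
Proof.
have u0v0 : u0 != v0 := adj_neq HF (contr_edge Hf).
case=> [[uy yv]|[vy yu]]; [|rewrite (contr_merge Hf)]; apply: contr_adj_img => //;
  apply/sedgeP => -[[E1 E2]|[E1 E2]].
- by rewrite E2 eqxx in yv.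
- by rewrite E1 eqxx in u0v0.
- by rewrite E1 eqxx in u0v0.
- by rewrite E2 eqxx in yu.
Qed.

(* Otherwise a vertex adjacent to both ends of the contracted edge would close
   a triangle. *)
Lemma contr_edge_inj {x y a b : V} : adj F x y -> adj F a b ->
  ~~ sedge _ x y u0 v0 -> ~~ sedge _ a b u0 v0 -> f x = f a -> f y = f b ->
  x = a /\ y = b.
Proof.
have uv0 := contr_edge Hf.
have no_apex p q r : adj F p q -> adj F p r -> sedge _ q r u0 v0 -> False.
  move=> pq pr /sedgeP [[Eq Er]|[Eq Er]]; subst q r.
  - by apply: (no_triangle HF pq uv0); rewrite adj_sym.
  - by apply: (no_triangle HF pq (z := u0)); rewrite adj_sym.
move=> xy ab nxy nab /(contr_inj Hf) [E1|E1] /(contr_inj Hf) [E2|E2] //.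
- by subst a; case: (no_apex x y b).
- by subst b; case: (no_apex y x a) => //; rewrite adj_sym.
- case/sedgeP: E1 => -[Ex _]; case/sedgeP: E2 => -[Ey _]; subst x y;
    by rewrite ?adj_irr ?sedge_refl ?sedge_refl_swap in xy nxy.
Qed.

Lemma contr_side {u v : V} : adj F u v -> ~~ sedge _ u v u0 v0 ->
  side G (f u) (f v) = side F u v.
Proof.
move=> uv nuv; have uv0 := contr_edge Hf.
have merged_step x y : sedge _ x y u0 v0 -> adj_cut F u v x y.
  move=> xy; apply/andP; split; first by case/sedgeP: xy => -[-> ->]; rewrite // adj_sym.
  by apply: contra nuv => uv_xy; apply: (sedge_trans (a := x) (b := y)); rewrite sedge_sym.
apply/setP => i; rewrite !inE (contr_lab Hf); apply/idP/idP.
- have lift x y' : connect (adj_cut F u v) u x -> adj_cut G (f u) (f v) (f x) y' ->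
      exists2 y, f y = y' & connect (adj_cut F u v) x y.
    move=> _ /andP [/(contr_adjE Hf) [x1 [y1 [fx1 <- xy1 nxy1]]] ne].
    exists y1 => //; have xy1' : adj_cut F u v x1 y1.
      by rewrite /adj_cut xy1; apply: contra ne => /sedgeP [[<- <-]|[<- <-]];
        rewrite fx1 ?sedge_refl ?sedge_refl_swap.
    case/(contr_inj Hf): fx1 => [<-|/merged_step x1x]; first exact: connect1.
    by apply: connect_trans (connect1 _) (connect1 xy1'); rewrite adj_cut_sym.
  case/(connect_lift_from lift) => y fy uy.
  case/(contr_inj Hf): fy => [<- //|/merged_step yl].
  exact: connect_trans uy (connect1 yl).
- apply: connect_homo_from => x y _ /andP [xy nxy].
  case: (boolP (sedge _ x y u0 v0)) => [/sedgeP [[-> ->]|[-> ->]]|n0];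
    [left; exact: (contr_merge Hf) | left; exact/esym/(contr_merge Hf) | right].
  rewrite /adj_cut (contr_adj_img xy n0); apply/sedgeP => -[[E1 E2]|[E1 E2]].
  + have [Ex Ey] := contr_edge_inj xy uv n0 nuv E1 E2.
    by rewrite Ex Ey sedge_refl in nxy.
  + have vu : adj F v u by rewrite adj_sym.
    have nvu : ~~ sedge _ v u u0 v0 by rewrite sedge_swapl.
    have [Ex Ey] := contr_edge_inj xy vu n0 nvu E1 E2.
    by rewrite Ex Ey sedge_refl_swap in nxy.
Qed.

End Contraction.

Section ContractionMatch.
Variables (n : nat) (A B G : xforest n).
Variables (p q : 'I_(nv A)) (s t : 'I_(nv B)).
Variables (psi : 'I_(nv A) -> 'I_(nv G)) (phi : 'I_(nv B) -> 'I_(nv G)).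
Hypothesis HA : forest_graph A.
Hypothesis Hpsi : contraction A G p q psi.
Hypothesis Hphi : contraction B G s t phi.
Hypothesis center : psi p = phi s.

Lemma contraction_match : exists g : 'I_(nv A) -> 'I_(nv B),
  [/\ g p = s, g q = t &
      forall y, y != p -> y != q -> [/\ g y != s, g y != t & phi (g y) = psi y]].
Proof.
pose pre y' := odflt s [pick z | phi z == y'].
have preE y' : phi (pre y') = y'.
  rewrite /pre; case: pickP => [z /eqP //|none].
  by have [z Ez] := contr_surj Hphi y'; move: (none z); rewrite Ez eqxx.
exists (fun y => if y == p then s else if y == q then t else pre (psi y)).
have qp : q != p by rewrite eq_sym (adj_neq HA (contr_edge Hpsi)).
rewrite eqxx (negbTE qp) eqxx; split => // y yp yq.
have off : psi y != psi p by apply/eqP => /(contr_merged Hpsi) [] E; rewrite E eqxx in yp yq.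
rewrite (negbTE yp) (negbTE yq) preE; split => //;
  by apply: contraNneq off => E; rewrite -(preE (psi y)) E center ?(contr_merge Hphi).
Qed.

End ContractionMatch.

Section ContractionIso.
Variables (n : nat) (A B G : xforest n).
Variables (p q : 'I_(nv A)) (s t : 'I_(nv B)).
Variables (psi : 'I_(nv A) -> 'I_(nv G)) (phi : 'I_(nv B) -> 'I_(nv G)).
Hypothesis HA : forest_graph A.
Hypothesis HB : forest_graph B.
Hypothesis Hpsi : contraction A G p q psi.
Hypothesis Hphi : contraction B G s t phi.
Hypothesis center : psi p = phi s.
Hypotheses (lp : ~~ labeled A p) (lq : ~~ labeled A q).
Hypotheses (ls : ~~ labeled B s) (lt : ~~ labeled B t).

Lemma contraction_iso :
  (forall y z, y != p -> y != q -> z != s -> z != t -> psi y = phi z ->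
     adj B s z = adj A p y /\ adj B t z = adj A q y) ->
  xiso A B.
Proof.
move=> nbrs.
have [g [gp gq gE]] := contraction_match HA Hpsi Hphi center.
have [h [hs ht hE]] := contraction_match HB Hphi Hpsi (esym center).
have unlab (F : xforest n) (u : 'I_(nv F)) i : ~~ labeled F u -> lab F i != u.
  by apply: contraNneq => <-; apply/existsP; exists i.
exists g; split.
- exists h => [y|z].
  + case: (eqVneq y p) => [->|yp]; first by rewrite gp hs.
    case: (eqVneq y q) => [->|yq]; first by rewrite gq ht.
    have [gs gt gy] := gE y yp yq; have [hp hq hgy] := hE _ gs gt.
    by apply: (contr_inj_off Hpsi yp yq); rewrite hgy gy.
  + case: (eqVneq z s) => [->|zs]; first by rewrite hs gp.
    case: (eqVneq z t) => [->|zt]; first by rewrite ht gq.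
    have [hp hq hz] := hE z zs zt; have [gs gt ghz] := gE _ hp hq.
    by apply: (contr_inj_off Hphi zs zt); rewrite ghz hz.
- move=> i; have [gs gt gi] := gE _ (unlab _ _ i lp) (unlab _ _ i lq).
  apply/esym/(contr_inj_off Hphi (unlab _ _ i ls) (unlab _ _ i lt)).
  by rewrite gi -(contr_lab Hpsi) (contr_lab Hphi).
have st : adj B s t := contr_edge Hphi.
have pq : adj A p q := contr_edge Hpsi.
have nbrsg y : y != p -> y != q -> adj B s (g y) = adj A p y /\ adj B t (g y) = adj A q y.
  by move=> yp yq; have [gs gt gy] := gE y yp yq; apply: nbrs.
move=> u v.
case: (eqVneq u p) => [->|up]; [|case: (eqVneq u q) => [->|uq]];
  (case: (eqVneq v p) => [->|vp]; [|case: (eqVneq v q) => [->|vq]]);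
  rewrite ?gp ?gq ?adj_irr ?st ?pq //.
- by rewrite (nbrsg v vp vq).1.
- by rewrite adj_sym // st adj_sym // pq.
- by rewrite (nbrsg v vp vq).2.
- by rewrite adj_sym // (nbrsg u up uq).1 adj_sym.
- by rewrite adj_sym // (nbrsg u up uq).2 adj_sym.
- have [gs gt gu] := gE u up uq; have [gs' gt' gv] := gE v vp vq.
  by rewrite -(contr_adj_off Hphi gs gt gs' gt') gu gv (contr_adj_off Hpsi).
Qed.

End ContractionIso.

Definition expansion_quartets n (C : xforest n) (x a b c d : 'I_n) : Prop :=
  exists u1 v1 u2 v2 : 'I_(nv C),
    [/\ ~~ sedge _ u1 v1 u2 v2,
        quartet C u1 v1 x a b c \/ quartet C u1 v1 x b a c
      & quartet C u2 v2 c d x a].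

Section Expansion.
Variables (n : nat) (Ci Fj Cj : xforest n).
Hypotheses (Mi : is_maxtree Ci) (Mj : is_maxtree Cj).
Let Gi := maxtree_graph Mi.
Let Gj := maxtree_graph Mj.
Variables (x : 'I_n) (p q1 q2 r1 r2 : 'I_(nv Ci)).
Local Notation xl := (lab Ci x).
Hypotheses (pxl : adj Ci p xl) (pq1 : adj Ci p q1) (pq2 : adj Ci p q2).
Hypotheses (q1r1 : adj Ci q1 r1) (q1r2 : adj Ci q1 r2).
Hypotheses (xlq1 : xl != q1) (xlq2 : xl != q2) (q2q1 : q2 != q1) (r12 : r1 != r2).
Hypotheses (r1p : r1 != p) (r2p : r2 != p).
Variable psi : 'I_(nv Ci) -> 'I_(nv Fj).
Hypothesis Hpsi : contraction Ci Fj p q1 psi.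
Hypothesis niso : ~ xiso Ci Cj.
Variables a b c d : 'I_n.
Hypotheses (ha : a \in side Ci r1 q1) (hb : b \in side Ci r2 q1).
Hypotheses (hc : c \in side Ci q2 p) (hd : d \in side Ci q2 p).

Let xlp : xl != p. Proof. by rewrite eq_sym (adj_neq Gi pxl). Qed.
Let q2p : q2 != p. Proof. by rewrite eq_sym (adj_neq Gi pq2). Qed.
Let r1q1 : r1 != q1. Proof. by rewrite eq_sym (adj_neq Gi q1r1). Qed.
Let r2q1 : r2 != q1. Proof. by rewrite eq_sym (adj_neq Gi q1r2). Qed.

Lemma nbrs_pq1_neq {o o'} : adj Ci p o -> adj Ci q1 o' -> o != o'.
Proof.
move=> po q1o'; apply/eqP => E; subst o'.
by apply: (no_triangle Gi pq1 q1o'); rewrite adj_sym.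
Qed.

Lemma outer_img_neq {o o'} : o' != p -> o' != q1 -> o != o' -> psi o != psi o'.
Proof. by move=> o'p o'q; apply: contra_neq => /(contr_inj_off Hpsi o'p o'q). Qed.

Lemma x_side_pq2 : x \in side Ci p q2.
Proof.
rewrite inE; apply: connect1; rewrite /adj_cut pxl sedge_swapl.
by rewrite sedge_neq ?xlp.
Qed.

Lemma a_side_pq2 : a \in side Ci p q2.
Proof.
have q1p : adj Ci q1 p by rewrite adj_sym.
have q12 : q1 != q2 by rewrite eq_sym.
exact: subsetP (side_subset Gi pq2 pq1 q12) _ (subsetP (side_subset Gi q1p q1r1 r1p) _ ha).
Qed.

Section Resolution.
Variables (s t : 'I_(nv Cj)) (phi : 'I_(nv Cj) -> 'I_(nv Fj)).
Variable g : 'I_(nv Ci) -> 'I_(nv Cj).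
Hypothesis Hphi : contraction Cj Fj s t phi.
Hypothesis center : psi p = phi s.
Hypothesis gE : forall y, y != p -> y != q1 -> [/\ g y != s, g y != t & phi (g y) = psi y].

Lemma match_inj {y y'} : y != p -> y != q1 -> y' != p -> y' != q1 -> g y = g y' -> y = y'.
Proof.
move=> yp yq y'p y'q E; have [_ _ gy] := gE y yp yq; have [_ _ gy'] := gE y' y'p y'q.
by apply: (contr_inj_off Hpsi y'p y'q); rewrite -gy -gy' E.
Qed.

Lemma match_neq {y y'} : y != p -> y != q1 -> y' != p -> y' != q1 -> y != y' -> g y != g y'.
Proof. by move=> yp yq y'p y'q; apply: contra_neq; apply: match_inj. Qed.

Lemma outer_lift {o} : o != p -> o != q1 -> adj Fj (psi p) (psi o) ->
  adj Cj s (g o) \/ adj Cj t (g o).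
Proof.
move=> op oq; have [gs gt go] := gE o op oq.
rewrite center => /(contr_nbr_merged Hphi) [y].
rewrite -go => /(contr_inj_off Hphi gs gt) -> [[sy _]|[ty _]]; by [left | right].
Qed.

(* Sides of an edge at a resolved vertex are read off in [Fj]. *)
Lemma side_outer {o e e'} : o != p -> o != q1 -> adj Ci e o -> (e = p \/ e = q1) ->
  adj Cj e' (g o) -> (e' = s \/ e' = t) -> side Cj (g o) e' = side Ci o e.
Proof.
move=> op oq eo ep e'go e's; have [gs gt go] := gE o op oq.
have oe : adj Ci o e by rewrite adj_sym.
have goe' : adj Cj (g o) e' by rewrite adj_sym.
rewrite -(contr_side Gj Hphi goe' (sedge_neq gs gt)).
rewrite -(contr_side Gi Hpsi oe (sedge_neq op oq)) go.
have -> : phi e' = phi s by case: e's => ->; rewrite ?(contr_merge Hphi).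
by rewrite -center; case: ep => ->; rewrite ?(contr_merge Hpsi).
Qed.

Lemma resolution_nbrs {u u' w w' o1 o2 y} :
  sedge _ u u' p q1 -> sedge _ w w' s t ->
  adj Ci u o1 -> adj Ci u o2 -> adj Cj w (g o1) -> adj Cj w (g o2) ->
  o1 != p -> o1 != q1 -> o2 != p -> o2 != q1 -> o1 != o2 ->
  y != p -> y != q1 -> adj Cj w (g y) = adj Ci u y.
Proof.
move=> uu' ww' uo1 uo2 wo1 wo2 o1p o1q o2p o2q o12 yp yq.
have [g1s g1t _] := gE o1 o1p o1q; have [g2s g2t _] := gE o2 o2p o2q.
have [gys gyt _] := gE y yp yq.
have adj_u' : adj Ci u u'.
  by case/sedgeP: uu' => -[-> ->]; rewrite ?(contr_edge Hpsi) // adj_sym ?(contr_edge Hpsi).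
have adj_w' : adj Cj w w'.
  by case/sedgeP: ww' => -[-> ->]; rewrite ?(contr_edge Hphi) // adj_sym ?(contr_edge Hphi).
have neq_u' v : v != p -> v != q1 -> v != u'.
  by case/sedgeP: uu' => -[_ ->].
have neq_w' v : v != s -> v != t -> v != w'.
  by case/sedgeP: ww' => -[_ ->].
apply/idP/idP => [wy|uy].
- have w'1 : w' != g o1 by rewrite eq_sym neq_w'.
  have w'2 : w' != g o2 by rewrite eq_sym neq_w'.
  have := maxtree_nbrs3 Mj adj_w' wo1 wo2 w'1 w'2 (match_neq o1p o1q o2p o2q o12) wy.
  case=> [E|/(match_inj yp yq o1p o1q) ->|/(match_inj yp yq o2p o2q) ->] //.
  by move: (neq_w' _ gys gyt); rewrite E eqxx.
- have u'1 : u' != o1 by rewrite eq_sym neq_u'.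
  have u'2 : u' != o2 by rewrite eq_sym neq_u'.
  case: (maxtree_nbrs3 Mi adj_u' uo1 uo2 u'1 u'2 o12 uy) => [E|->|->] //.
  by move: (neq_u' _ yp yq); rewrite E eqxx.
Qed.

Lemma split_iso : adj Cj s (g xl) -> adj Cj s (g q2) ->
  adj Cj t (g r1) -> adj Cj t (g r2) -> xiso Ci Cj.
Proof.
move=> sxl sq2 tr1 tr2.
apply: (contraction_iso Gi Gj Hpsi Hphi center).
- exact: (maxtree_unlabeled Mi pxl pq1 xlq1).
- exact: (maxtree_unlabeled Mi q1r1 q1r2 r12).
- exact: (maxtree_unlabeled Mj sxl sq2 (match_neq xlp xlq1 q2p q2q1 xlq2)).
- exact: (maxtree_unlabeled Mj tr1 tr2 (match_neq r1p r1q1 r2p r2q1 r12)).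
move=> y z yp yq zs zt; have [gs gt <-] := gE y yp yq.
move/esym/(contr_inj_off Hphi gs gt) => ->; split.
- exact: (resolution_nbrs (sedge_refl _ _) (sedge_refl _ _) pxl pq2 sxl sq2
    xlp xlq1 q2p q2q1 xlq2 yp yq).
- exact: (resolution_nbrs (sedge_refl_swap _ _) (sedge_refl_swap _ _) q1r1 q1r2
    tr1 tr2 r1p r1q1 r2p r2q1 r12 yp yq).
Qed.

Lemma split_quartets {r r' ar ar'} :
  adj Ci q1 r -> adj Ci q1 r' -> r != p -> r' != p ->
  ar \in side Ci r q1 -> ar' \in side Ci r' q1 ->
  adj Cj s (g xl) -> adj Cj s (g r) -> adj Cj t (g q2) -> adj Cj t (g r') ->
  [/\ ~~ sedge _ s t (g q2) t, quartet Cj s t x ar ar' c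
    & quartet Cj (g q2) t c d x a].
Proof.
move=> q1r q1r' rp r'p har har' sxl sr tq2 tr'.
have rq : r != q1 by rewrite eq_sym (adj_neq Gi q1r).
have r'q : r' != q1 by rewrite eq_sym (adj_neq Gi q1r').
have [gxs gxt _] := gE xl xlp xlq1; have [g2s g2t g2] := gE q2 q2p q2q1.
have [_ grt _] := gE r rp rq; have [gr's _ _] := gE r' r'p r'q.
have st := contr_edge Hphi; have ts : adj Cj t s by rewrite adj_sym.
have side_tq2 : side Cj t (g q2) = side Ci p q2.
  have ntq2 : ~~ sedge _ t (g q2) s t by rewrite sedge_swapl sedge_neq.
  have npq2 : ~~ sedge _ p q2 p q1 by rewrite sedge_swapl (sedge_neq q2p q2q1).
  rewrite -(contr_side Gj Hphi tq2 ntq2) -(contr_side Gi Hpsi pq2 npq2).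
  by rewrite g2 -(contr_merge Hphi) center.
have side_q2t : side Cj (g q2) t = side Ci q2 p.
  exact: side_outer q2p q2q1 pq2 (or_introl erefl) tq2 (or_intror erefl).
split; first by rewrite sedge_sym sedge_neq.
- split => //.
  + apply: (subsetP (side_subset Gj st sxl gxt)).
    by rewrite (side_outer xlp xlq1 pxl (or_introl erefl) sxl (or_introl erefl)) inE.
  + apply: (subsetP (side_subset Gj st sr grt)).
    by rewrite (side_outer rp rq q1r (or_intror erefl) sr (or_introl erefl)).
  + apply: (subsetP (side_subset Gj ts tr' gr's)).
    by rewrite (side_outer r'p r'q q1r' (or_intror erefl) tr' (or_intror erefl)).
  + by apply: (subsetP (side_subset Gj ts tq2 g2s)); rewrite side_q2t.
- split; rewrite ?side_q2t ?side_tq2 ?x_side_pq2 ?a_side_pq2 //.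
  by rewrite adj_sym.
Qed.

Lemma resolution_quartets : adj Cj s (g xl) -> expansion_quartets Cj x a b c d.
Proof.
move=> sxl; have st := contr_edge Hphi; have ts : adj Cj t s by rewrite adj_sym.
have [gxs gxt _] := gE xl xlp xlq1; have [g2s g2t _] := gE q2 q2p q2q1.
have [g3s g3t _] := gE r1 r1p r1q1; have [g4s g4t _] := gE r2 r2p r2q1.
have g12 := match_neq xlp xlq1 q2p q2q1 xlq2.
have g13 := match_neq xlp xlq1 r1p r1q1 (nbrs_pq1_neq pxl q1r1).
have g14 := match_neq xlp xlq1 r2p r2q1 (nbrs_pq1_neq pxl q1r2).
have g23 := match_neq q2p q2q1 r1p r1q1 (nbrs_pq1_neq pq2 q1r1).
have g24 := match_neq q2p q2q1 r2p r2q1 (nbrs_pq1_neq pq2 q1r2).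
have g34 := match_neq r1p r1q1 r2p r2q1 r12.
have lift_r1 := outer_lift r1p r1q1 ((contr_adj_merged Gi Hpsi) (or_intror (conj q1r1 r1p))).
have lift_r2 := outer_lift r2p r2q1 ((contr_adj_merged Gi Hpsi) (or_intror (conj q1r2 r2p))).
case: (outer_lift q2p q2q1 ((contr_adj_merged Gi Hpsi) (or_introl (conj pq2 q2q1)))) => [sq2|tq2].
- have tr1 : adj Cj t (g r1).
    case: lift_r1 => // sr1; exfalso.
    by apply: (maxtree_nbrs4 Mj st sxl sq2 sr1); rewrite // eq_sym.
  have tr2 : adj Cj t (g r2).
    case: lift_r2 => // sr2; exfalso.
    by apply: (maxtree_nbrs4 Mj st sxl sq2 sr2); rewrite // eq_sym.
  by case: niso; apply: split_iso.
- case: lift_r1 => [sr1|tr1].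
  + have tr2 : adj Cj t (g r2).
      case: lift_r2 => // sr2; exfalso.
      by apply: (maxtree_nbrs4 Mj st sxl sr1 sr2); rewrite // eq_sym.
    have [ne Q1 Q2] := split_quartets q1r1 q1r2 r1p r2p ha hb sxl sr1 tq2 tr2.
    by exists s, t, (g q2), t; split => //; left.
  + have sr2 : adj Cj s (g r2).
      case: lift_r2 => // tr2; exfalso.
      by apply: (maxtree_nbrs4 Mj ts tq2 tr1 tr2); rewrite // eq_sym.
    have [ne Q1 Q2] := split_quartets q1r2 q1r1 r2p r1p hb ha sxl sr2 tq2 tr1.
    by exists s, t, (g q2), t; split => //; right.
Qed.

End Resolution.

Lemma expansion_center s t phi : contraction Cj Fj s t phi -> psi p = phi s.
Proof.
move=> Hphi; have [z pz] := contr_surj Hphi (psi p).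
case: (eqVneq z s) => [<- //|zs]; case: (eqVneq z t) => [E|zt].
  by rewrite -pz E (contr_merge Hphi).
have lift o : (adj Ci p o /\ o != q1) \/ (adj Ci q1 o /\ o != p) ->
    exists2 y, phi y = psi o & adj Cj z y.
  by move/(contr_adj_merged Gi Hpsi); rewrite -pz => /(contr_nbr_off Hphi zs zt).
have [y1 e1 z1] := lift xl (or_introl (conj pxl xlq1)).
have [y2 e2 z2] := lift q2 (or_introl (conj pq2 q2q1)).
have [y3 e3 z3] := lift r1 (or_intror (conj q1r1 r1p)).
have [y4 e4 z4] := lift r2 (or_intror (conj q1r2 r2p)).
have img_neq u v o o' : phi u = psi o -> phi v = psi o' -> psi o != psi o' -> u != v.
  by move=> eu ev; apply: contra_neq => E; rewrite -eu -ev E.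
exfalso; apply: (maxtree_nbrs4 Mj z1 z2 z3 z4).
- exact: img_neq e1 e2 (outer_img_neq q2p q2q1 xlq2).
- exact: img_neq e1 e3 (outer_img_neq r1p r1q1 (nbrs_pq1_neq pxl q1r1)).
- exact: img_neq e1 e4 (outer_img_neq r2p r2q1 (nbrs_pq1_neq pxl q1r2)).
- exact: img_neq e2 e3 (outer_img_neq r1p r1q1 (nbrs_pq1_neq pq2 q1r1)).
- exact: img_neq e2 e4 (outer_img_neq r2p r2q1 (nbrs_pq1_neq pq2 q1r2)).
- exact: img_neq e3 e4 (outer_img_neq r2p r2q1 r12).
Qed.

Lemma expansion s t phi : contraction Cj Fj s t phi -> expansion_quartets Cj x a b c d.
Proof.
move=> Hphi; have center := expansion_center Hphi.
have [g [_ _ gE]] := contraction_match Gi Hpsi Hphi center.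
case: (outer_lift g Hphi center gE xlp xlq1 ((contr_adj_merged Gi Hpsi) (or_introl (conj pxl xlq1)))).
  exact: resolution_quartets Hphi center gE.
have center' : psi p = phi t by rewrite center (contr_merge Hphi).
apply: (resolution_quartets g (contraction_sym Gj Hphi) center') => y yp yq.
by have [gs gt gy] := gE y yp yq.
Qed.

End Expansion.

Section CommonContraction.
Variables (n : nat) (Cj Ck G : xforest n).
Hypotheses (Hj : forest_graph Cj) (Hk : forest_graph Ck).
Variables (uj vj : 'I_(nv Cj)) (uk vk : 'I_(nv Ck)).
Variables (fj : 'I_(nv Cj) -> 'I_(nv G)) (fk : 'I_(nv Ck) -> 'I_(nv G)).
Hypotheses (Cfj : contraction Cj G uj vj fj) (Cfk : contraction Ck G uk vk fk).

Lemma common_contraction_quartet u v i j k l :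
  quartet Cj u v i j k l -> ~~ sedge _ u v uj vj -> exists u' v', quartet Ck u' v' i j k l.
Proof.
case=> uv hi hj hk hl ne.
have vu : adj Cj v u by rewrite adj_sym.
have ne' : ~~ sedge _ v u uj vj by rewrite sedge_swapl.
have /(contr_adjE Cfk) [u' [v' [eu ev u'v' ne'']]] := contr_adj_img Cfj uv ne.
have v'u' : adj Ck v' u' by rewrite adj_sym.
have ne''' : ~~ sedge _ v' u' uk vk by rewrite sedge_swapl.
have Euv : side Ck u' v' = side Cj u v.
  by rewrite -(contr_side Hk Cfk u'v' ne'') eu ev (contr_side Hj Cfj uv ne).
have Evu : side Ck v' u' = side Cj v u.
  by rewrite -(contr_side Hk Cfk v'u' ne''') eu ev (contr_side Hj Cfj vu ne').
by exists u', v'; split; rewrite ?Euv ?Evu.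
Qed.

Lemma common_contraction_contra x a b c d :
  expansion_quartets Cj x a b c d -> expansion_quartets Ck x c d a b -> False.
Proof.
move=> [u1 [v1 [u2 [v2 [ne E1 E2]]]]] [w1 [z1 [w2 [z2 [_ K1 K2]]]]].
have transfer u v i j k l : quartet Cj u v i j k l -> ~~ sedge _ u v uj vj ->
    exists u' v', quartet Ck u' v' i j k l.
  exact: common_contraction_quartet.
have contracted1 : sedge _ u1 v1 uj vj.
  apply/negPn/negP => ne1.
  case: E1 => [/transfer|/transfer] => /(_ ne1) [u' [v' Q]].
  - exact: (quartet_incompatible Hk K2 (quartet_swapl Q)).
  - exact: (quartet_incompatible Hk (quartet_swapl K2) (quartet_swapl Q)).
have contracted2 : sedge _ u2 v2 uj vj.
  apply/negPn/negP => /(transfer _ _ _ _ _ _ E2) [u' [v' Q]].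
  case: K1 => K1.
  - exact: (quartet_incompatible Hk Q (quartet_swapl K1)).
  - exact: (quartet_incompatible Hk (quartet_swapl Q) (quartet_swapl K1)).
by rewrite (sedge_trans contracted1 contracted2) in ne.
Qed.

End CommonContraction.

(* The contraction is realised on ['I_(nv F).-1] by removing [v] from the
   index type and sending it to the image of [u]. *)
Lemma contraction_exists n (F : xforest n) {u v : 'I_(nv F)} :
  forest_graph F -> adj F u v ->
  exists (G : xforest n) (f : 'I_(nv F) -> 'I_(nv G)), contraction F G u v f.
Proof.
move=> HF uv; case: (unliftP v u) => [u' Eu|Eu]; last by move: uv; rewrite Eu adj_irr.
pose f (y : 'I_(nv F)) : 'I_(nv F).-1 := odflt u' (unlift v y).
pose G := @XForest n (nv F).-1 (fun x' y' => [exists x, exists y,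
   [&& f x == x', f y == y', adj F x y & ~~ sedge _ x y u v]]) (fun i => f (lab F i)).
exists G, f; constructor => //.
- by move=> y; exists (lift v y); rewrite /f liftK.
- by rewrite /f Eu liftK unlift_none.
- move=> x y; rewrite /f; case: (unliftP v x) => [x1 ->|->]; case: (unliftP v y) => [y1 ->|->];
    rewrite ?liftK ?unlift_none /= => E.
  + by left; rewrite E.
  + by right; rewrite E -Eu sedge_refl.
  + by right; rewrite -E -Eu sedge_refl_swap.
  + by left.
- move=> x' y'; split.
  + by case/existsP => x /existsP [y /and4P [/eqP fx /eqP fy xy ne]]; exists x, y.
  + move=> [x [y [fx fy xy ne]]]; apply/existsP; exists x; apply/existsP; exists y.
    by rewrite fx fy !eqxx xy ne.
Qed.

(* An NNI over [{u, v}] only moves edges between the two ends of [{u, v}],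
   which are identified by the contraction. *)
Lemma nni_swap_contraction n (F G : xforest n) {u v b c : 'I_(nv F)}
    {f : 'I_(nv F) -> 'I_(nv G)} :
  forest_graph F -> contraction F G u v f ->
  adj F u b -> adj F v c -> b != v -> c != u ->
  contraction (nni_swap F u v b c) G u v f.
Proof.
move=> HF [uv surj merge inj labE adjE] ub vc bv cu.
have bu : b != u by rewrite eq_sym (adj_neq HF ub).
have cv : c != v by rewrite eq_sym (adj_neq HF vc).
have nb y : ~~ sedge _ b y u v := sedge_neq bu bv.
have nc y : ~~ sedge _ c y u v := sedge_neq cu cv.
have nb' y : ~~ sedge _ y b u v by rewrite sedge_swapl.
have nc' y : ~~ sedge _ y c u v by rewrite sedge_swapl.
have uvS : ~~ sedge _ u v u b && ~~ sedge _ u v v c.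
  have vu : v != u by rewrite eq_sym (adj_neq HF uv).
  by rewrite sedge_swapl !sedge_neq // eq_sym.
constructor => //=; first by rewrite uv uvS.
move=> x' y'; apply: iff_trans (adjE x' y') _; split=> -[x [y [<- <- xy nxy]]].
- case: (boolP (sedge _ x y u b)) => [/sedgeP [[-> ->]|[-> ->]]|nub].
    by exists v, b; rewrite -merge /= sedge_refl !orbT nb'.
  by exists b, v; rewrite -merge /= sedge_refl_swap !orbT nb.
  case: (boolP (sedge _ x y v c)) => [/sedgeP [[-> ->]|[-> ->]]|nvc].
    by exists u, c; rewrite merge /= sedge_refl orbT nc'.
  by exists c, u; rewrite merge /= sedge_refl_swap orbT nc.
  by exists x, y; rewrite /= xy nub nvc.
- case/orP: xy => [/orP [/andP [/andP [xy _] _]|/sedgeP [[-> ->]|[-> ->]]]|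
                  /sedgeP [[-> ->]|[-> ->]]].
  + by exists x, y.
  + by exists v, c; rewrite -merge vc.
  + by exists c, v; rewrite -merge adj_sym.
  + by exists u, b; rewrite merge ub.
  + by exists b, u; rewrite merge adj_sym.
Qed.

Lemma xiso_contraction n (A B G : xforest n) (u v : 'I_(nv A)) f :
  xiso A B -> contraction A G u v f ->
  exists (u' v' : 'I_(nv B)) f', contraction B G u' v' f'.
Proof.
move=> [h [[hi hK hiK] labE adjE]] [uv surj merge inj labG adjG].
have sedgeE x y a b : sedge _ (h x) (h y) (h a) (h b) = sedge _ x y a b.
  by rewrite /sedge !(inj_eq (can_inj hK)).
exists (h u), (h v), (f \o hi); constructor => /=.
- by rewrite adjE.
- by move=> y; case: (surj y) => x <-; exists (h x); rewrite hK.
- by rewrite !hK.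
- move=> x y /inj [E|]; first by left; rewrite -(hiK x) E hiK.
  by rewrite -sedgeE !hiK; right.
- by move=> i; rewrite labE hK.
- move=> x' y'; apply: iff_trans (adjG x' y') _.
  split=> -[x [y [<- <- xy ne]]].
  + by exists (h x), (h y); rewrite !hK adjE sedgeE.
  + by exists (hi x), (hi y); rewrite -adjE -sedgeE !hiK.
Qed.

Lemma nni_common_contraction n (Cj Ck : xforest n) : nni_adj Cj Ck ->
  exists G : xforest n,
    (exists u v f, contraction Cj G u v f) /\ (exists u v f, contraction Ck G u v f).
Proof.
case=> /maxtree_graph Hj _ [u [v [b [c [uv [_ [_ [ub [bv [vc [cu iso]]]]]]]]]]].
have [G [f Cf]] := contraction_exists Hj uv.
exists G; split; first by exists u, v, f.
exact: (xiso_contraction iso (nni_swap_contraction Hj Cf ub vc bv cu)).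
Qed.

Lemma maxtree_cover_contraction n (C F : xforest n) : is_maxtree C -> 2 < n ->
  covers C F -> exists u v f, contraction C F u v f.
Proof.
move=> M n2 [_ [_ [u [v [/contract_onP [f Cf]|[[uv _] sd]]]]]].
  by exists u, v, f.
by case: (maxtree_no_safe_del M n2 uv sd).
Qed.

Lemma critical_triplet_quartets n (Ci Cj Ck : xforest n) :
  2 < n -> critical_triplet Ci Cj Ck ->
  exists x a b c d : 'I_n,
    expansion_quartets Cj x a b c d /\ expansion_quartets Ck x c d a b.
Proof.
move=> n2 [Mi [Mj [Mk [x [p [q1 [q2 H]]]]]]].
case: H => _ [xp [pq1 [pq2 [q12 [q1x [q2x [_ [iq1 [iq2 Hj_Hk]]]]]]]]].
case: Hj_Hk => [[nj [Fj [cj [_ covj]]]] [nk [Fk [ck [_ covk]]]]].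
have Gi := maxtree_graph Mi; have HXi : is_xforest Ci by case: Mi.
have pxl : adj Ci p (lab Ci x) by rewrite adj_sym.
have q1p : adj Ci q1 p by rewrite adj_sym.
have q2p : adj Ci q2 p by rewrite adj_sym.
have [r1 [r2 [q1r1 q1r2 r12 r1p r2p]]] := maxtree_other_nbrs Mi (internal_unlabeled Mi iq1) q1p.
have [c1 [d1 [q2c1 q2d1 c12 c1p d1p]]] := maxtree_other_nbrs Mi (internal_unlabeled Mi iq2) q2p.
have label_beyond u w : adj Ci u w -> exists i, i \in side Ci w u.
  by move=> uw; apply: (side_nonempty HXi); rewrite adj_sym.
have [[a ha] [b hb]] := (label_beyond _ _ q1r1, label_beyond _ _ q1r2).
have [[c hc] [d hd]] := (label_beyond _ _ q2c1, label_beyond _ _ q2d1).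
have ha' := subsetP (side_subset Gi q1p q1r1 r1p) a ha.
have hb' := subsetP (side_subset Gi q1p q1r2 r2p) b hb.
have hc' := subsetP (side_subset Gi q2p q2c1 c1p) c hc.
have hd' := subsetP (side_subset Gi q2p q2d1 d1p) d hd.
have [[psij Cpj] [psik Cpk]] := (contract_onP cj, contract_onP ck).
have [s [t [phi Cphi]]] := maxtree_cover_contraction Mj n2 covj.
have [s' [t' [phi' Cphi']]] := maxtree_cover_contraction Mk n2 covk.
have xq1 : lab Ci x != q1 by rewrite eq_sym.
have xq2 : lab Ci x != q2 by rewrite eq_sym.
have q21 : q2 != q1 by rewrite eq_sym.
exists x, a, b, c, d; split.
- exact: (expansion Mi Mj x pxl pq1 pq2 q1r1 q1r2 xq1 xq2 q21 r12 r1p r2p Cpj nj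
    ha hb hc' hd' Cphi).
- exact: (expansion Mi Mk x pxl pq2 pq1 q2c1 q2d1 xq2 xq1 q12 c12 c1p d1p Cpk nk
    hc hd ha' hb' Cphi').
Qed.

Unset Implicit Arguments.

Theorem mainTheorem6 (n : nat) (Ci Cj Ck : xforest n) :
  5 <= n -> critical_triplet Ci Cj Ck ->
  ~ nni_adj Cj Ck /\
  ~ (exists F : xforest n, covers Cj F /\ covers Ck F).
Proof.
move=> n5 T; have n2 : 2 < n by apply: leq_trans n5.
have [x [a [b [c [d [Ej Ek]]]]]] := critical_triplet_quartets n2 T.
case: T => _ [Mj [Mk _]].
have no_common G : (exists u v f, contraction Cj G u v f) ->
    (exists u v f, contraction Ck G u v f) -> False.
  move=> [uj [vj [fj Cfj]]] [uk [vk [fk Cfk]]].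
  exact: (common_contraction_contra (maxtree_graph Mj) (maxtree_graph Mk) Cfj Cfk Ej Ek).
split.
- by case/nni_common_contraction => G [Hj Hk]; apply: (no_common G).
- case=> F [/(maxtree_cover_contraction Mj n2) Hj /(maxtree_cover_contraction Mk n2)].
  exact: no_common.
Qed.
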